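(* Let $m,n$ be positive integers, $\psi:[1,\infty)\to(0,\infty)$ non-increasing and continuous, and let $r=\mathcal D_{m,n}(\psi):[t_0,\infty)\to\mathbb R$. For $t\in\mathbb R$ let $f_t=\mathrm{diag}(e^{t/m},\dots,e^{t/m},e^{-t/n},\dots,e^{-t/n})\in SL_{m+n}(\mathbb R)$ ($m$ entries $e^{t/m}$, $n$ entries $e^{-t/n}$), and let $\Delta(\Lambda)=\max_{\mathbf v\in\Lambda\setminus\{0\}}\log(1/\|\mathbf v\|)$ for lattices $\Lambda\subset\mathbb R^{m+n}$. Then a unimodular lattice $\Lambda\subset\mathbb R^{m+n}$ is $(\psi,n)$-approximable if and only if there exist arbitrarily large $t>0$ with $\Delta(f_t\Lambda)\ge r(t)$. In particular, a matrix $A\in M_{m,n}(\mathbb R)$ is $\psi$-approximable if and only if there exist arbitrarily large $t>0$ with $\Delta(f_t\Lambda_A)\ge r(t)$.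
   Context: $\|\cdot\|$ is the max norm. For $\mathbf v\in\mathbb R^{m+n}$, $\mathbf v^{(m)}$ = first $m$ coordinates, $\mathbf v_{(n)}$ = last $n$ coordinates. $\Lambda$ is $(\psi,n)$-approximable if there exist $\mathbf v\in\Lambda$ with $\|\mathbf v_{(n)}\|$ arbitrarily large and $\|\mathbf v^{(m)}\|^m\le\psi(\|\mathbf v_{(n)}\|^n)$. $A\in M_{m,n}(\mathbb R)$ is $\psi$-approximable if there are infinitely many $\mathbf q\in\mathbb Z^n$ with $\|A\mathbf q+\mathbf p\|^m\le\psi(\|\mathbf q\|^n)$ for some $\mathbf p\in\mathbb Z^m$. $\Lambda_A=\begin{pmatrix}I_m&A\\0&I_n\end{pmatrix}\mathbb Z^{m+n}$. $\mathcal D_{m,n}(\psi)$ is the unique continuous function $r:[t_0,\infty)\to\mathbb R$, with $t_0=-\frac n{m+n}\log\psi(1)$, such that $t\mapsto t-nr(t)$ is strictly increasing and tends to $\infty$, $t\mapsto t+mr(t)$ is nondecreasing, and $\psi(e^{t-nr(t)})=e^{-t-mr(t)}$ for all $t\ge t_0$. *)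

From HB Require Import structures.
From mathcomp Require Import all_boot all_order all_algebra.
From mathcomp Require Import all_classical all_reals all_analysis.
Unset Printing Implicit Defensive.
Import Order.TTheory GRing.Theory Num.Theory numFieldNormedType.Exports.
Local Open Scope classical_set_scope.
Local Open Scope ring_scope.

Section Defs.
Variable R : realType.

Definition mnorm (k : nat) (v : 'cV[R]_k) : R := \big[Num.max/0]_(i < k) `|v i 0|.

Definition lattice_of (k : nat) (g : 'M[R]_k) : set 'cV[R]_k :=
  [set g *m map_mx (fun z : int => z%:~R) z | z in [set: 'cV[int]_k]].

(* (psi,n)-approximability of a set of vectors in R^{m+n}:
   v^(m) = usubmx v (first m coords), v_(n) = dsubmx v (last n coords) *)
Definition psi_n_approximable (m n : nat) (psi : R -> R)
    (L : set 'cV[R]_(m + n)) : Prop :=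
  forall M : R, exists2 v, L v &
    M < mnorm _ (dsubmx v) /\
    mnorm _ (usubmx v) ^+ m <= psi (mnorm _ (dsubmx v) ^+ n).

Definition psi_approximable (m n : nat) (psi : R -> R) (A : 'M[R]_(m, n)) : Prop :=
  ~ finite_set [set q : 'cV[int]_n | exists p : 'cV[int]_m,
      mnorm _ (A *m map_mx (fun z : int => z%:~R) q + map_mx (fun z : int => z%:~R) p) ^+ m
        <= psi (mnorm _ (map_mx (fun z : int => z%:~R) q) ^+ n)].

Definition Lambda_A (m n : nat) (A : 'M[R]_(m, n)) : set 'cV[R]_(m + n) :=
  lattice_of _ (block_mx 1%:M A 0 1%:M).

Definition ft (m n : nat) (t : R) : 'M[R]_(m + n) :=
  diag_mx (row_mx (const_mx (expR (t / m%:R)) : 'rV[R]_m)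
                  (const_mx (expR (- t / n%:R)) : 'rV[R]_n)).

Definition Delta (k : nat) (L : set 'cV[R]_k) : R :=
  sup [set ln ((mnorm _ v)^-1) | v in L `\ 0].

Definition t0 (m n : nat) (psi : R -> R) : R :=
  - (n%:R / (m + n)%:R) * ln (psi 1).

(* r is (a representative on [t0,oo) of) D_{m,n}(psi): the defining properties.
   We also require e^{t - n r(t)} >= 1, i.e. that psi is evaluated in its
   domain [1,oo). *)
Definition is_Dmn (m n : nat) (psi : R -> R) (r : R -> R) : Prop :=
  let T0 := t0 m n psi in
  {within [set t : R | T0 <= t], continuous (r : R -> R)} /\
  (forall s t, T0 <= s -> s < t -> s - n%:R * r s < t - n%:R * r t) /\
  (forall M : R, exists T : R, forall t, T <= t -> M < t - n%:R * r t) /\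
  (forall s t, T0 <= s -> s <= t -> s + m%:R * r s <= t + m%:R * r t) /\
  (forall t, T0 <= t -> 0 <= t - n%:R * r t) /\
  (forall t, T0 <= t -> psi (expR (t - n%:R * r t)) = expR (- t - m%:R * r t)).

End Defs.

Arguments mnorm {R} k v.
Arguments lattice_of {R} k g.
Arguments psi_n_approximable {R} m n psi L.
Arguments psi_approximable {R} m n psi A.
Arguments Lambda_A {R} m n A.
Arguments ft {R} m n t.
Arguments Delta {R} k L.
Arguments t0 {R} m n psi.
Arguments is_Dmn {R} m n psi r.

(** If [Lambda] is approximable, a lattice vector [v] with large [|v_(n)|] is
    shrunk by [f_t] to norm [e^{-r(t)}] at the time [t] where
    [t - n r(t) = n log |v_(n)|]; such a [t] exists by the intermediate value
    theorem, since [t - n r(t)] is continuous, increasing and unbounded.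
    Conversely a short vector of [f_t Lambda] satisfies
    [|v^(m)|^m <= psi(e^s)] and [|v_(n)|^n <= e^s] with [s = t - n r(t)].
    Either these vectors have unbounded [|v_(n)|], and then they witness
    approximability, or they stay in a bounded region, where the lattice has
    only finitely many vectors; then [|v^(m)|] is bounded below, which contradicts
    [psi(e^s) -> 0] unless some lattice vector has [v^(m) = 0] (take its
    multiples) or [psi] is bounded below (use Dirichlet's pigeonhole principle). *)
From HB Require Import structures.
From mathcomp Require Import all_boot all_order all_algebra.
From mathcomp Require Import all_classical all_reals all_analysis.
From mathcomp Require Import zify ring lra.
Import Order.TTheory GRing.Theory Num.Theory numFieldNormedType.Exports.
Local Open Scope classical_set_scope.
Local Open Scope ring_scope.

Section MaxNorm.
Context {R : realType}.

Lemma mnorm_ge0 {k} (v : 'cV[R]_k) : 0 <= mnorm k v.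
Proof. exact: bigmax_ge_id. Qed.

Lemma mnorm_leP {k} (v : 'cV[R]_k) c :
  mnorm k v <= c <-> 0 <= c /\ (forall i, `|v i 0| <= c).
Proof.
split; first by move/bigmax_leP => [? H]; split => // i; exact: H.
by move=> [c0 H]; apply/bigmax_leP; split.
Qed.

Lemma le_mnorm {k} (v : 'cV[R]_k) i : `|v i 0| <= mnorm k v.
Proof. exact: le_bigmax. Qed.

Lemma mnorm_eq0 {k} (v : 'cV[R]_k) : mnorm k v = 0 -> v = 0.
Proof.
move=> h; apply/matrixP => i j; rewrite ord1 mxE.
by apply/eqP; rewrite -normr_le0; have := le_mnorm v i; rewrite h.
Qed.

Lemma mnorm0 {k} : mnorm k (0 : 'cV[R]_k) = 0.
Proof.
apply/le_anti; rewrite mnorm_ge0 andbT.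
by apply/mnorm_leP; split => // i; rewrite mxE normr0.
Qed.

Lemma mnorm_gt0 {k} (v : 'cV[R]_k) : v != 0 -> 0 < mnorm k v.
Proof.
move=> hv; rewrite lt_def mnorm_ge0 andbT; apply/eqP => h.
by move: hv; rewrite (mnorm_eq0 _ h) eqxx.
Qed.

Lemma mnormZ {k} (v : 'cV[R]_k) c : mnorm k (c *: v) = `|c| * mnorm k v.
Proof.
apply/le_anti/andP; split.
  apply/mnorm_leP; split; first by rewrite mulr_ge0 ?mnorm_ge0.
  by move=> i; rewrite mxE normrM ler_wpM2l ?le_mnorm.
have [->|c0] := eqVneq c 0; first by rewrite normr0 mul0r mnorm_ge0.
rewrite -ler_pdivlMl ?normr_gt0 //.
apply/mnorm_leP; split; first by rewrite mulr_ge0 ?invr_ge0 ?mnorm_ge0.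
move=> i; rewrite ler_pdivlMl ?normr_gt0 //.
by have := le_mnorm (c *: v) i; rewrite mxE normrM.
Qed.

Lemma mnorm_le_vsubP {m n} (v : 'cV[R]_(m + n)) c :
  mnorm (m + n) v <= c <-> mnorm m (usubmx v) <= c /\ mnorm n (dsubmx v) <= c.
Proof.
split=> [/mnorm_leP [c0 hv]|[/mnorm_leP [c0 hu] /mnorm_leP [_ hd]]].
  by split; apply/mnorm_leP; split => // i; rewrite mxE.
apply/mnorm_leP; split => // i; case: (split_ordP i) => j ->.
  by have := hu j; rewrite mxE.
by have := hd j; rewrite mxE.
Qed.

Definition entrysum {p k} (A : 'M[R]_(p, k)) := \sum_i \sum_j `|A i j|.

Lemma entrysum_ge0 {p k} (A : 'M[R]_(p, k)) : 0 <= entrysum A.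
Proof. by apply: sumr_ge0 => i _; apply: sumr_ge0. Qed.

Lemma mnorm_mulmx_le {p k} (A : 'M[R]_(p, k)) v :
  mnorm p (A *m v) <= entrysum A * mnorm k v.
Proof.
apply/mnorm_leP; split; first by rewrite mulr_ge0 ?entrysum_ge0 ?mnorm_ge0.
move=> i; rewrite mxE (le_trans (ler_norm_sum _ _ _)) //.
apply: (@le_trans _ _ ((\sum_j `|A i j|) * mnorm k v)).
  rewrite mulr_suml; apply: ler_sum => j _; rewrite normrM ler_wpM2l //.
  exact: le_mnorm.
rewrite ler_wpM2r ?mnorm_ge0 // /entrysum (bigD1 i) //= lerDl.
by apply: sumr_ge0 => i' _; apply: sumr_ge0.
Qed.

End MaxNorm.

Section IntegerVectors.
Context {R : realType}.

Definition zvec {k} (z : 'cV[int]_k) : 'cV[R]_k := map_mx (fun z : int => z%:~R) z.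

Lemma zvec0 {k} : zvec (0 : 'cV[int]_k) = 0 :> 'cV[R]_k.
Proof. by apply/matrixP => i j; rewrite !mxE. Qed.

Lemma zvecB {k} (z w : 'cV[int]_k) : zvec (z - w) = zvec z - zvec w :> 'cV[R]_k.
Proof. by apply/matrixP => i j; rewrite !mxE intrB. Qed.

Lemma zvecZ {k} (z : 'cV[int]_k) (c : int) : zvec (c *: z) = c%:~R *: zvec z :> 'cV[R]_k.
Proof. by apply/matrixP => i l; rewrite !mxE intrM. Qed.

Lemma mnorm_zvec_ge1 {k} (z : 'cV[int]_k) : z != 0 -> 1 <= mnorm k (zvec z : 'cV[R]_k).
Proof.
move=> hz; have [i hi] : exists i, z i 0 != 0.
  apply/existsP; apply: contraNT hz; rewrite negb_exists => /forallP H.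
  by apply/eqP/matrixP => i j; rewrite ord1 mxE; exact/eqP/negPn/H.
apply: le_trans (le_mnorm (zvec z) i); rewrite mxE -intr_norm.
by rewrite ler1z -gtz0_ge1 normr_gt0.
Qed.

Lemma zvec_eq0 {k} (z : 'cV[int]_k) : (zvec z == 0 :> 'cV[R]_k) = (z == 0).
Proof.
apply/idP/idP => [|/eqP ->]; last by rewrite zvec0.
apply: contraTT => /mnorm_zvec_ge1; apply: contraL => /eqP ->.
by rewrite mnorm0 ler10.
Qed.

Lemma unitmx_normdet1 {k} (g : 'M[R]_k) : `|\det g| = 1 -> g \in unitmx.
Proof.
move=> h; rewrite unitmxE unitfE; apply/eqP => h0.
by move: h; rewrite h0 normr0 => /eqP; rewrite eq_sym oner_eq0.
Qed.

Lemma mnorm_lattice_gt0 {k} {g : 'M[R]_k} {z : 'cV[int]_k} :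
  g \in unitmx -> z != 0 -> 0 < mnorm k (g *m zvec z).
Proof.
move=> gu z0; apply: mnorm_gt0; apply: contraNneq z0 => h.
by rewrite -zvec_eq0 -(mulKmx gu (zvec z)) h mulmx0.
Qed.

Lemma lattice_discrete {k} (g : 'M[R]_k) : g \in unitmx ->
  exists2 C, 0 < C & forall z, mnorm k (zvec z) <= C * mnorm k (g *m zvec z).
Proof.
move=> gu; exists (entrysum (invmx g) + 1); first by rewrite ltr_wpDl ?entrysum_ge0.
move=> z; rewrite -{1}(mulKmx gu (zvec z)).
by apply: le_trans (mnorm_mulmx_le _ _) _; rewrite ler_wpM2r ?mnorm_ge0 // lerDl.
Qed.

Lemma lattice_coord_bound {k} (g : 'M[R]_k) (B : R) : g \in unitmx ->
  exists b : nat, forall z : 'cV[int]_k,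
    mnorm k (g *m zvec z) <= B -> forall i, `|z i 0| <= b%:Z.
Proof.
move=> gu; have [C C0 HC] := lattice_discrete g gu.
have CB0 : 0 <= C * `|B| by rewrite mulr_ge0 // ltW.
exists (Num.Def.archi_bound (C * `|B|)) => z hz i.
have zi : `|z i 0|%:~R <= C * `|B| :> R.
  rewrite intr_norm; have := le_mnorm (zvec z) i; rewrite mxE => /le_trans; apply.
  by apply: le_trans (HC z) _; rewrite ler_pM2l // (le_trans hz) ?ler_norm.
by rewrite -(ler_int R); apply: ltW; apply: le_lt_trans zi (archi_boundP CB0).
Qed.

(** Integer vectors with coordinates in [[-b, b]], shifted to [[0, 2b]]. *)
Definition box k b := {ffun 'I_k -> 'I_(2 * b).+1}.
Definition box_vec {k b} (x : box k b) : 'cV[int]_k := \col_i ((x i : nat)%:Z - b%:Z).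
Definition box_of {k} b (w : 'cV[int]_k) : box k b :=
  [ffun i => inord (absz (w i 0 + b%:Z))].

Lemma box_ofK {k} b (w : 'cV[int]_k) :
  (forall i, `|w i 0| <= b%:Z) -> box_vec (box_of b w) = w.
Proof.
move=> H; apply/matrixP => i j; rewrite ord1 !mxE ffunE.
have := H i; set a := w i 0; rewrite ler_norml => /andP [Ha1 Ha2].
have h1 : (0 <= a + b%:Z) by lia.
have h2 : (absz (a + b%:Z)%R < (2 * b).+1)%N by lia.
rewrite inordK // gez0_abs //; lia.
Qed.

Lemma lattice_ball_in_box {k} (g : 'M[R]_k) (B : R) : g \in unitmx ->
  exists b : nat, forall z : 'cV[int]_k, mnorm k (g *m zvec z) <= B ->
    exists x : box k b, box_vec x = z.
Proof.
move=> gu; have [b hb] := lattice_coord_bound g B gu.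
by exists b => z hz; exists (box_of b z); apply: box_ofK; apply: hb.
Qed.

Lemma lattice_ball_min_gt0 {k} (g : 'M[R]_k) (B : R) (f : 'cV[R]_k -> R) :
  g \in unitmx -> (forall z, z != 0 -> 0 < f (g *m zvec z)) ->
  exists2 eta, 0 < eta & forall z, z != 0 ->
    mnorm k (g *m zvec z) <= B -> eta <= f (g *m zvec z).
Proof.
move=> gu hf; have [b Hb] := lattice_ball_in_box g B gu.
exists (\big[Num.min/1]_(x : box k b | box_vec x != 0) f (g *m zvec (box_vec x))).
  by apply/bigmin_gtP; split => // x; apply: hf.
move=> z z0 hz; have [x hx] := Hb z hz.
by rewrite -hx; apply: bigmin_le_cond; rewrite hx.
Qed.

End IntegerVectors.

Section Delta.
Context {R : realType}.

Lemma ler_lnV (y a : R) : 0 < y -> (a <= ln y^-1) = (y <= expR (- a)).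
Proof. by move=> y0; rewrite lnV ?posrE // lerNr -[LHS]ler_expR lnK. Qed.

Lemma lattice_setD0 {k} (g : 'M[R]_k) v :
  (lattice_of k g `\ 0) v -> exists2 z, z != 0 & v = g *m zvec z.
Proof.
move=> [[z _ <-] v0]; exists z => //; apply: contra_notN v0 => /eqP ->.
by rewrite -[map_mx _ 0]/(zvec 0) zvec0 mulmx0.
Qed.

Lemma lattice_setD0_mulmx {k} (g : 'M[R]_k) z : g \in unitmx -> z != 0 ->
  (lattice_of k g `\ 0) (g *m zvec z).
Proof.
move=> gu z0; split; first by exists z.
by move=> /= h; have := mnorm_lattice_gt0 gu z0; rewrite h mnorm0 ltxx.
Qed.

Lemma Delta_has_sup {k} {g : 'M[R]_k} {z : 'cV[int]_k} : g \in unitmx -> z != 0 ->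
  has_sup [set ln (mnorm k v)^-1 | v in lattice_of k g `\ 0].
Proof.
move=> gu z0; have [C C0 HC] := lattice_discrete g gu.
split.
  exists (ln (mnorm k (g *m zvec z))^-1).
  by exists (g *m zvec z); first exact: lattice_setD0_mulmx.
exists (ln C) => _ [_ /lattice_setD0 [w w0 ->] <-].
have w_gt0 := mnorm_lattice_gt0 gu w0.
rewrite ler_ln ?posrE ?invr_gt0 // -div1r ler_pdivrMr //.
exact: le_trans (mnorm_zvec_ge1 _ w0) (HC w).
Qed.

Lemma le_Delta {k} {g : 'M[R]_k} {z : 'cV[int]_k} : g \in unitmx -> z != 0 ->
  ln (mnorm k (g *m zvec z))^-1 <= Delta k (lattice_of k g).
Proof.
move=> gu z0; apply: sup_upper_bound; first exact: Delta_has_sup gu z0.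
by exists (g *m zvec z) => //; apply: lattice_setD0_mulmx.
Qed.

(** Only finitely many lattice vectors are shorter than a given one, so the
    supremum defining [Delta] is a maximum. *)
Lemma Delta_attained {k} {g : 'M[R]_k} : g \in unitmx -> (0 < k)%N ->
  exists2 z, z != 0 & Delta k (lattice_of k g) = ln (mnorm k (g *m zvec z))^-1.
Proof.
move=> gu k0; pose f z := ln (mnorm k (g *m zvec z))^-1.
pose z1 : 'cV[int]_k := const_mx 1.
have z10 : z1 != 0.
  by apply/eqP => /matrixP/(_ (Ordinal k0) 0); rewrite !mxE => /eqP; rewrite oner_eq0.
have [b hb] := lattice_ball_in_box g (mnorm k (g *m zvec z1)) gu.
have [x1 x1E] := hb z1 (lexx _).
have x10 : box_vec x1 != 0 by rewrite x1E.
case: (@arg_maxP _ _ _ x1 (fun x => box_vec x != 0) (fun x => f (box_vec x)) x10)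
  => x x0 xmax.
exists (box_vec x) => //; apply/le_anti; rewrite le_Delta // andbT.
apply: ge_sup; first by case: (Delta_has_sup gu z10).
move=> _ [_ /lattice_setD0 [z z0 ->] <-]; rewrite -/(f z).
have [hz|hz] := leP (mnorm k (g *m zvec z)) (mnorm k (g *m zvec z1)).
  by have [x' x'E] := hb z hz; rewrite -x'E; apply: xmax; rewrite x'E.
apply: le_trans (xmax x1 x10); rewrite x1E /f ltW //.
have [z1_gt0 z_gt0] := (mnorm_lattice_gt0 gu z10, mnorm_lattice_gt0 gu z0).
by rewrite !lnV ?posrE // ltrN2 ltr_ln ?posrE.
Qed.

Lemma le_DeltaP {k} (g : 'M[R]_k) rho : g \in unitmx -> (0 < k)%N ->
  rho <= Delta k (lattice_of k g) <->
  exists2 z, z != 0 & mnorm k (g *m zvec z) <= expR (- rho).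
Proof.
move=> gu k0; split=> [|[z z0 hz]].
  have [z z0 ->] := Delta_attained gu k0.
  by exists z => //; rewrite -ler_lnV ?mnorm_lattice_gt0.
by apply: le_trans (le_Delta gu z0); rewrite ler_lnV ?mnorm_lattice_gt0.
Qed.

End Delta.

Section Grid.
Context {R : realType}.

Lemma floor_cell_close (L eps : R) (P : nat) (y1 y2 : R) :
  0 < eps -> 2 * L / eps <= P%:R -> `|y1| <= L -> `|y2| <= L ->
  (inord (absz (Num.floor ((y1 + L) / eps))) : 'I_P.+1) =
    inord (absz (Num.floor ((y2 + L) / eps))) ->
  `|y1 - y2| < eps.
Proof.
move=> eps0 hP h1 h2 heq.
have rng y : `|y| <= L -> 0 <= Num.floor ((y + L) / eps) /\
    (absz (Num.floor ((y + L) / eps)) < P.+1)%N.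
  rewrite ler_norml => /andP [hy1 hy2].
  have a0 : 0 <= (y + L) / eps by apply: divr_ge0; [lra | exact: ltW].
  have aP : (y + L) / eps <= P%:R.
    rewrite ler_pdivrMr //; rewrite ler_pdivrMr // in hP; lra.
  have f0 : 0 <= Num.floor ((y + L) / eps) by rewrite floor_ge0.
  split => //.
  have : (Num.floor ((y + L) / eps))%:~R <= (P%:Z)%:~R :> R.
    exact: le_trans (floor_le _) aP.
  by rewrite ler_int => hle; lia.
have [f10 f1r] := rng _ h1; have [f20 f2r] := rng _ h2.
move: heq => /(congr1 val); rewrite /= !inordK // => habs.
have feq : Num.floor ((y1 + L) / eps) = Num.floor ((y2 + L) / eps).
  by rewrite -[LHS]gez0_abs // -[RHS]gez0_abs // habs.
have := floor_itv ((y1 + L) / eps); have := floor_itv ((y2 + L) / eps).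
rewrite -feq intrD => /andP [a1 b1] /andP [a2 b2].
have : `|(y1 + L) / eps - (y2 + L) / eps| < 1 by rewrite ltr_norml; lra.
have -> : (y1 + L) / eps - (y2 + L) / eps = (y1 - y2) / eps by field; rewrite gt_eqF.
by rewrite normrM [`|eps^-1|]gtr0_norm ?invr_gt0 // ltr_pdivrMr // mul1r.
Qed.

Lemma grid_count_lt (A c m n N : nat) : (0 < n)%N ->
  N = (A.+1 ^ m * c ^ (m + n))%N ->
  ((A * N).+1 ^ m * c ^ (m + n) < N.+1 ^ (m + n))%N.
Proof.
move=> n0 hN; have h1 : ((A * N).+1 <= A.+1 * N.+1)%N by rewrite mulSn mulnS; lia.
apply: (@leq_ltn_trans ((A.+1 * N.+1) ^ m * c ^ (m + n))%N).
  rewrite leq_mul2r; apply/orP; right.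
  by case: (posnP m) => [->|m0]; rewrite ?expn0 ?leq_exp2r.
rewrite expnMn -mulnA mulnC -mulnA [(c ^ _ * _)%N]mulnC -hN.
rewrite expnD ltn_pmul2l ?expn_gt0 //.
by apply: (@leq_trans N.+1) => //; rewrite -{1}(expn1 N.+1) leq_pexp2l.
Qed.

Variables (m n : nat) (g : 'M[R]_(m + n)) (eps : R) (A N : nat).

Definition grid_vec (x : {ffun 'I_(m + n) -> 'I_N.+1}) : 'cV[int]_(m + n) :=
  \col_i ((x i : nat)%:Z).

Lemma grid_vec_inj : injective grid_vec.
Proof.
move=> x y /matrixP hxy; apply/ffunP => i; apply: val_inj.
by have := hxy i 0; rewrite !mxE => -[].
Qed.

Lemma mnorm_grid_le x : mnorm (m + n) (g *m zvec (grid_vec x)) <= entrysum g * N%:R.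
Proof.
apply: le_trans (mnorm_mulmx_le _ _) _; rewrite ler_wpM2l ?entrysum_ge0 //.
apply/mnorm_leP; split => // j; rewrite !mxE.
by rewrite [_%:~R]/(_%:R) normr_nat ler_nat -ltnS ltn_ord.
Qed.

(** The cell of [[-K N, K N]^m], cut into cubes of side [eps], containing the
    first [m] coordinates of [g x]; with [K = entrysum g], [K N] bounds the
    entries of [g x]. *)
Definition cell x : {ffun 'I_m -> 'I_(A * N).+1} :=
  [ffun i => inord (absz (Num.floor
     (((g *m zvec (grid_vec x)) (lshift n i) 0 + entrysum g * N%:R) / eps)))].

Lemma cell_eq_usubmx_le x y : 0 < eps -> 2 * entrysum g / eps <= A%:R ->
  cell x = cell y -> mnorm m (usubmx (g *m zvec (grid_vec x - grid_vec y))) <= eps.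
Proof.
move=> eps0 hA /ffunP hxy; apply/mnorm_leP; split => [|i]; first exact: ltW.
set gx := g *m zvec (grid_vec x); set gy := g *m zvec (grid_vec y).
have -> : usubmx (g *m zvec (grid_vec x - grid_vec y)) i 0 =
    gx (lshift n i) 0 - gy (lshift n i) 0 by rewrite zvecB mulmxBr !mxE.
apply: ltW.
have hAN : 2 * (entrysum g * N%:R) / eps <= (A * N)%:R.
  by rewrite natrM mulrA mulrAC ler_wpM2r.
apply: floor_cell_close eps0 hAN _ _ _;
  try exact: le_trans (le_mnorm _ _) (mnorm_grid_le _).
by have := hxy i; rewrite !ffunE.
Qed.

End Grid.

Arguments grid_vec {m n N}.
Arguments cell {R m n}.

Section Dirichlet.
Context {R : realType}.

Lemma small_usubmx_unbounded {m n} (g : 'M[R]_(m + n)) (eps : R) (b : nat) :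
  0 < eps -> (0 < n)%N ->
  exists z : 'cV[int]_(m + n),
    mnorm m (usubmx (g *m zvec z)) <= eps /\ exists i, b%:Z < `|z i 0|.
Proof.
move=> eps0 n0; apply: contrapT => hno.
have hb z : mnorm m (usubmx (g *m zvec z)) <= eps -> forall i, `|z i 0| <= b%:Z.
  move=> hz i; rewrite leNgt; apply/negP => hi; apply: hno.
  by exists z; split => //; exists i.
have A0 : 0 <= 2 * entrysum g / eps by rewrite divr_ge0 ?mulr_ge0 ?entrysum_ge0 ?ltW.
set A := Num.Def.archi_bound (2 * entrysum g / eps).
have hA : 2 * entrysum g / eps <= A%:R := ltW (archi_boundP A0).
set N := (A.+1 ^ m * (2 * b).+1 ^ (m + n))%N.
pose c := cell g eps A N; pose x0 : {ffun 'I_(m + n) -> 'I_N.+1} := [ffun=> ord0].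
pose rep y := odflt x0 [pick x | c x == y].
have repP x : c (rep (c x)) = c x.
  by rewrite /rep; case: pickP => [x' /eqP //|/(_ x)]; rewrite eqxx.
(* Grid points in the same cell differ by a vector with small first [m]
    coordinates, hence by a vector of the box: [Phi] below is injective,
    although there are more grid points than pairs (cell, box vector). *)
pose Phi x := (c x, box_of b (grid_vec x - grid_vec (rep (c x)))).
have PhiK x : box_vec (Phi x).2 = grid_vec x - grid_vec (rep (c x)).
  apply: box_ofK; apply: hb.
  by apply: (@cell_eq_usubmx_le _ _ _ g eps A N) => //; rewrite repP.
have Phi_inj : injective Phi.
  move=> x y hxy; have hc : c x = c y := congr1 fst hxy.
  have := PhiK x; rewrite hxy PhiK hc.
  by move/addIr/grid_vec_inj.
have := leq_card _ Phi_inj; rewrite card_prod /box !card_ffun !card_ord.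
by rewrite leqNgt (grid_count_lt A _ m n N n0 erefl).
Qed.

Lemma dirichlet_lattice {m n} (g : 'M[R]_(m + n)) (eps M : R) :
  g \in unitmx -> 0 < eps -> (0 < n)%N ->
  exists z : 'cV[int]_(m + n),
    mnorm m (usubmx (g *m zvec z)) <= eps /\ M < mnorm n (dsubmx (g *m zvec z)).
Proof.
move=> gu eps0 n0; have [b hb] := lattice_coord_bound g (Num.max eps M) gu.
have [z [hz [i hi]]] := small_usubmx_unbounded g eps b eps0 n0.
exists z; split => //; rewrite ltNge; apply/negP => hD.
suff : `|z i 0| <= b%:Z by rewrite leNgt hi.
by apply: hb; apply/mnorm_le_vsubP; rewrite !le_max hz hD orbT.
Qed.

End Dirichlet.

Section Flow.
Context {R : realType}.

Lemma usubmx_ft m n t (v : 'cV[R]_(m + n)) :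
  usubmx (ft m n t *m v) = expR (t / m%:R) *: usubmx v.
Proof.
apply/matrixP => i j; rewrite /ft mul_diag_mx !mxE.
by rewrite (unsplitK (inl _ i)) mxE.
Qed.

Lemma dsubmx_ft m n t (v : 'cV[R]_(m + n)) :
  dsubmx (ft m n t *m v) = expR (- t / n%:R) *: dsubmx v.
Proof.
apply/matrixP => i j; rewrite /ft mul_diag_mx !mxE.
by rewrite (unsplitK (inr _ i)) mxE.
Qed.

Lemma ft_unitmx m n (t : R) : ft m n t \in unitmx.
Proof.
rewrite unitmxE unitfE /ft det_diag; apply/prodf_neq0 => i _.
by case: (split_ordP i) => j ->; rewrite ?row_mxEl ?row_mxEr mxE gt_eqF ?expR_gt0.
Qed.

Lemma ft_lattice m n t (g : 'M[R]_(m + n)) :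
  [set ft m n t *m v | v in lattice_of (m + n) g] = lattice_of (m + n) (ft m n t *m g).
Proof.
apply/seteqP; split => w /=.
  by move=> [v [z _ <-] <-]; exists z => //; rewrite mulmxA.
by move=> [z _ <-]; exists (g *m zvec z); [exists z | rewrite mulmxA].
Qed.

Lemma ler_expRM (U a b : R) : (expR a * U <= expR b) = (U <= expR (b - a)).
Proof. by rewrite -ler_pdivlMl ?expR_gt0 // -expRN -expRD addrC. Qed.

Lemma ler_pXn_expR (U a : R) k : (0 < k)%N -> 0 <= U ->
  (U ^+ k <= expR (k%:R * a)) = (U <= expR a).
Proof. by move=> k0 U0; rewrite expRM_natl ler_pXn2r // nnegrE ?expR_ge0. Qed.

Lemma mnorm_ft_le m n t rho (v : 'cV[R]_(m + n)) : (0 < m)%N -> (0 < n)%N ->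
  mnorm (m + n) (ft m n t *m v) <= expR (- rho) <->
  mnorm m (usubmx v) ^+ m <= expR (- t - m%:R * rho) /\
  mnorm n (dsubmx v) ^+ n <= expR (t - n%:R * rho).
Proof.
move=> m0 n0; have mR : m%:R != 0 :> R by rewrite pnatr_eq0 -lt0n.
have nR : n%:R != 0 :> R by rewrite pnatr_eq0 -lt0n.
have -> : - t - m%:R * rho = m%:R * (- rho - t / m%:R) by field.
have -> : t - n%:R * rho = n%:R * (- rho - - t / n%:R) by field.
rewrite mnorm_le_vsubP usubmx_ft dsubmx_ft !mnormZ !ger0_norm ?expR_ge0 //.
by rewrite !ler_expRM !ler_pXn_expR ?mnorm_ge0.
Qed.

End Flow.

Definition Delta_ge_often {R : realType} m n (r : R -> R) (L : set 'cV[R]_(m + n)) :=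
  forall T : R, exists t, T < t /\ 0 < t /\
    r t <= Delta (m + n) [set ft m n t *m v | v in L].

Lemma continuous_subMr_within_itv {R : realType} (f : R -> R) (a b c : R) :
  {within [set t | a <= t], continuous f} ->
  {within `[a, b], continuous (fun t => t - c * f t)}.
Proof.
move=> fc; have fc' : {within `[a, b], continuous f}.
  by apply: continuous_subspaceW fc => x /=; rewrite in_itv /= => /andP [].
move=> x; apply: cvgB; first by apply: continuous_subspaceT => y; exact: cvg_id.
apply: cvgM; last exact: fc'.
by apply: continuous_subspaceT => y; exact: cvg_cst.
Qed.

Section Approximation.
Context {R : realType} {m n : nat} {psi r : R -> R}.
Hypotheses (hm : (0 < m)%N) (hn : (0 < n)%N).
Hypotheses (psi_pos : forall x, 1 <= x -> 0 < psi x)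
  (psi_noninc : forall x y, 1 <= x -> x <= y -> psi y <= psi x).
Hypothesis hr : is_Dmn m n psi r.

Lemma Dmn_level T : exists y, forall Y, y < Y ->
  exists t, T < t /\ t0 m n psi <= t /\ t - n%:R * r t = Y.
Proof.
have [rc [sinc [sinf _]]] := hr; set T0 := t0 m n psi.
pose s t := t - n%:R * r t.
have s_le a b : T0 <= a -> a <= b -> s a <= s b.
  by move=> ha; rewrite le_eqVlt => /predU1P [->|/(sinc _ _ ha)/ltW].
set T2 := Num.max T0 T + 1.
have T02 : T0 <= T2 by rewrite ler_wpDr // le_max lexx.
exists (Num.max (s T2) (s T0)) => Y; rewrite gt_max => /andP [hY2 hY0].
have [T1 hT1] := sinf Y; set Tb := Num.max T1 T2.
have T0b : T0 <= Tb by rewrite le_max T02 orbT.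
have [t tin st] : exists2 t, t \in `[T0, Tb] & s t = Y.
  apply: IVT => //; first exact: continuous_subMr_within_itv.
  by rewrite ge_min (ltW hY0) le_max (ltW (hT1 Tb _)) ?orbT // le_max lexx.
have tT0 : T0 <= t by move: tin; rewrite in_itv => /andP [].
have T2t : T2 < t.
  rewrite ltNge; apply/negP => /(s_le _ _ tT0); rewrite st => hle.
  by have := lt_le_trans hY2 hle; rewrite ltxx.
exists t; split; last by [].
by apply: lt_trans T2t; rewrite /T2 ltr_pwDr // le_max lexx orbT.
Qed.

Lemma mnorm_ft_le_Dmn t (v : 'cV[R]_(m + n)) : t0 m n psi <= t ->
  mnorm (m + n) (ft m n t *m v) <= expR (- r t) <->
  mnorm m (usubmx v) ^+ m <= psi (expR (t - n%:R * r t)) /\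
  mnorm n (dsubmx v) ^+ n <= expR (t - n%:R * r t).
Proof.
have [_ [_ [_ [_ [_ hpsi]]]]] := hr.
by move=> tT0; rewrite hpsi //; exact: mnorm_ft_le.
Qed.

Lemma approximable_Delta_ge_often g : g \in unitmx ->
  psi_n_approximable m n psi (lattice_of (m + n) g) ->
  Delta_ge_often m n r (lattice_of (m + n) g).
Proof.
move=> gu happ T; have [y hy] := Dmn_level (Num.max T 0).
have [_ [z _ <-] [hD hU]] := happ (expR (y / n%:R)).
set D := mnorm n _ in hD hU; have D0 : 0 < D := lt_trans (expR_gt0 _) hD.
have [|t [+ [tT0 st]]] := hy (n%:R * ln D).
  by rewrite mulrC -ltr_pdivrMr ?ltr0n // -ltr_expR lnK ?posrE.
rewrite gt_max => /andP [tT t0]; exists t; do 2!split => //.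
have z0 : z != 0.
  apply: contraTneq D0 => z0.
  by rewrite /D z0 -[map_mx _ 0]/(zvec 0) zvec0 mulmx0 linear0 mnorm0 ltxx.
rewrite ft_lattice; apply/le_DeltaP; first by rewrite unitmx_mul ft_unitmx gu.
  by rewrite addn_gt0 hm.
exists z => //; rewrite -mulmxA; apply/mnorm_ft_le_Dmn => //.
by rewrite st expRM_natl lnK ?posrE.
Qed.

Lemma Delta_ge_often_witness g S : g \in unitmx ->
  Delta_ge_often m n r (lattice_of (m + n) g) ->
  exists2 z, z != 0 & exists2 s, S < s &
    mnorm m (usubmx (g *m zvec z)) ^+ m <= psi (expR s) /\
    mnorm n (dsubmx (g *m zvec z)) ^+ n <= expR s.
Proof.
move=> gu hD; have [_ [_ [sinf _]]] := hr; have [T1 hT1] := sinf S.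
have [t [tT [_ hrt]]] := hD (Num.max T1 (t0 m n psi)).
rewrite gt_max in tT; case/andP: tT => tT1 tT0.
have ftgu : ft m n t *m g \in unitmx by rewrite unitmx_mul ft_unitmx gu.
rewrite ft_lattice in hrt.
have k0 : (0 < m + n)%N by rewrite addn_gt0 hm.
have [z z0 hz] := (le_DeltaP _ _ ftgu k0).1 hrt.
exists z => //; exists (t - n%:R * r t); first exact/hT1/ltW.
by apply/mnorm_ft_le_Dmn; [exact: ltW | rewrite mulmxA].
Qed.

Lemma approximable_of_usubmx_eq0 g z : g \in unitmx -> z != 0 ->
  usubmx (g *m zvec z) = 0 -> psi_n_approximable m n psi (lattice_of (m + n) g).
Proof.
move=> gu z0 hu M; set v := g *m zvec z.
have D0 : 0 < mnorm n (dsubmx v).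
  rewrite lt_neqAle mnorm_ge0 andbT; apply: contraTneq (mnorm_lattice_gt0 gu z0).
  by move=> D0; rewrite -leNgt; apply/mnorm_le_vsubP; rewrite -/v hu mnorm0 -D0.
set M1 := Num.max M 1; have M1_ge1 : 1 <= M1 by rewrite le_max lexx orbT.
have hj := archi_boundP (divr_ge0 (le_trans ler01 M1_ge1) (ltW D0)).
set j := Num.Def.archi_bound _ in hj.
have jD : M1 < j%:R * mnorm n (dsubmx v) by rewrite -ltr_pdivrMr.
exists (g *m zvec (j%:Z *: z)); first by exists (j%:Z *: z).
rewrite zvecZ -scalemxAr !linearZ /= -/v hu scaler0 mnorm0 !mnormZ.
have -> : `|(j%:Z)%:~R| = j%:R :> R by rewrite -intr_norm.
split; first by apply: le_lt_trans jD; rewrite le_max lexx.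
rewrite expr0n gt_eqF //= ltW // psi_pos // exprn_ege1 //.
exact: ltW (le_lt_trans M1_ge1 jD).
Qed.

Lemma approximable_of_psi_ge g c : g \in unitmx -> 0 < c ->
  (forall x, 1 <= x -> c <= psi x) ->
  psi_n_approximable m n psi (lattice_of (m + n) g).
Proof.
move=> gu c0 hc M; set eps := Num.min c 1.
have eps0 : 0 < eps by rewrite lt_min c0 ltr01.
have [z [hU hD]] := dirichlet_lattice g eps (Num.max M 1) gu eps0 hn.
exists (g *m zvec z); first by exists z.
have D1 : 1 <= mnorm n (dsubmx (g *m zvec z)).
  by apply: ltW; apply: le_lt_trans hD; rewrite le_max lexx orbT.
split; first by apply: le_lt_trans hD; rewrite le_max lexx.
apply: le_trans _ (hc _ (exprn_ege1 _ D1)).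
apply: (@le_trans _ _ (eps ^+ m)); first by rewrite ler_pXn2r // nnegrE ?mnorm_ge0 // ltW.
apply: le_trans (ler_iXnr hm (ltW eps0) _) _; first by rewrite ge_min lexx orbT.
by rewrite ge_min lexx.
Qed.

Lemma approximable_of_psi_inf0 g : g \in unitmx ->
  (forall z, z != 0 -> 0 < mnorm m (usubmx (g *m zvec z))) ->
  (forall c, 0 < c -> exists2 x, 1 <= x & psi x < c) ->
  Delta_ge_often m n r (lattice_of (m + n) g) ->
  psi_n_approximable m n psi (lattice_of (m + n) g).
Proof.
move=> gu hU0 psi_small hD M; set M1 := Num.max M 1.
set B := Num.max M1 (Num.max 1 (psi 1)).
have [eta eta0 heta] := lattice_ball_min_gt0 g B (fun v => mnorm m (usubmx v)) gu hU0.
have [x x1 psix] := psi_small _ (exprn_gt0 m eta0).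
have [z z0 [s + [hU hDn]]] := Delta_ge_often_witness g (Num.max (ln x) 0) gu hD.
rewrite gt_max => /andP [xs s0].
set U := mnorm m _ in hU; set D := mnorm n _ in hDn.
have es1 : 1 <= expR s by rewrite -expR0 ler_expR ltW.
have [MD|DM] := ltP M1 D.
  exists (g *m zvec z); first by exists z.
  have D1 : 1 <= D ^+ n by rewrite exprn_ege1 // (le_trans _ (ltW MD)) // le_max lexx orbT.
  split; first by apply: le_lt_trans MD; rewrite le_max lexx.
  exact: le_trans hU (psi_noninc _ _ D1 hDn).
exfalso.
have hU1 : U ^+ m <= psi 1 := le_trans hU (psi_noninc _ _ (lexx 1) es1).
have UB : U <= Num.max 1 (psi 1).
  have [U1|U1] := leP U 1; first by rewrite le_max U1.
  by rewrite le_max (le_trans (ler_eXnr hm (ltW U1)) hU1) orbT.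
have etaU : eta <= U.
  apply: (heta z z0); apply/mnorm_le_vsubP.
  by rewrite [U <= _]le_max UB orbT [D <= _]le_max DM.
have : U ^+ m < eta ^+ m.
  apply: le_lt_trans hU (le_lt_trans (psi_noninc _ _ x1 _) psix).
  by rewrite -[x in x <= _]lnK ?posrE ?(lt_le_trans ltr01 x1) // ler_expR ltW.
by rewrite ltNge ler_pXn2r ?nnegrE ?mnorm_ge0 ?(ltW eta0) // etaU.
Qed.

Lemma Delta_ge_often_approximable g : g \in unitmx ->
  Delta_ge_often m n r (lattice_of (m + n) g) ->
  psi_n_approximable m n psi (lattice_of (m + n) g).
Proof.
move=> gu hD.
have [[c c0 hc]|psi_small] := pselect (exists2 c, 0 < c & forall x, 1 <= x -> c <= psi x).
  exact: approximable_of_psi_ge gu c0 hc.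
have [[z z0 hz]|hU0] := pselect (exists2 z, z != 0 & usubmx (g *m zvec z) = 0).
  exact: approximable_of_usubmx_eq0 gu z0 hz.
apply: approximable_of_psi_inf0 => // [z z0|c c0].
  rewrite lt_neqAle mnorm_ge0 andbT eq_sym; apply/negP => /eqP/mnorm_eq0 hz.
  by apply: hU0; exists z.
apply: contrapT => hc; apply: psi_small; exists c => // x x1.
by rewrite leNgt; apply/negP => psix; apply: hc; exists x.
Qed.

Lemma psi_n_approximable_Delta_ge_often g : g \in unitmx ->
  psi_n_approximable m n psi (lattice_of (m + n) g) <->
  Delta_ge_often m n r (lattice_of (m + n) g).
Proof.
by move=> gu; split; [exact: approximable_Delta_ge_often | exact: Delta_ge_often_approximable].
Qed.

End Approximation.

Section LambdaA.
Context {R : realType} {m n : nat} (A : 'M[R]_(m, n)).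

Lemma zvec_col_mx (p : 'cV[int]_m) (q : 'cV[int]_n) :
  zvec (col_mx p q) = col_mx (zvec p) (zvec q) :> 'cV[R]_(m + n).
Proof. exact: map_col_mx. Qed.

Lemma usubmx_LambdaA (z : 'cV[int]_(m + n)) :
  usubmx (block_mx 1%:M A 0 1%:M *m zvec z) = A *m zvec (dsubmx z) + zvec (usubmx z).
Proof.
by rewrite -[z in LHS]vsubmxK zvec_col_mx mul_block_col col_mxKu mul1mx addrC.
Qed.

Lemma dsubmx_LambdaA (z : 'cV[int]_(m + n)) :
  dsubmx (block_mx 1%:M A 0 1%:M *m zvec z) = zvec (dsubmx z).
Proof.
by rewrite -[z in LHS]vsubmxK zvec_col_mx mul_block_col col_mxKd mul1mx mul0mx add0r.
Qed.

Lemma psi_approximable_LambdaA psi :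
  psi_approximable m n psi A <-> psi_n_approximable m n psi (Lambda_A m n A).
Proof.
rewrite /psi_approximable; set S := (X in ~ finite_set X); split=> [hinf M|happ hfin].
  apply: contrapT => hno; apply: hinf.
  have [b hb] := lattice_ball_in_box (1%:M : 'M[R]_n) M (unitmx1 _ _).
  apply: (@sub_finite_set _ _ [set box_vec x | x in [set: box n b]]); last first.
    exact: finite_image finite_finset.
  move=> q [p hp]; suff hq : mnorm n (1%:M *m zvec q) <= M.
    by have [x hx] := hb q hq; exists x.
  rewrite mul1mx leNgt; apply/negP => hM; apply: hno.
  exists (block_mx 1%:M A 0 1%:M *m zvec (col_mx p q)); first by exists (col_mx p q).
  by rewrite usubmx_LambdaA dsubmx_LambdaA col_mxKu col_mxKd.
pose B := \big[Num.max/0]_(q <- finmap.enum_fset (fset_set S)) mnorm n (zvec q : 'cV[R]_n).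
have [_ [z _ <-] [hD hU]] := happ B.
rewrite usubmx_LambdaA dsubmx_LambdaA in hD hU.
have Sq : S (dsubmx z) by exists (usubmx z).
suff : mnorm n (zvec (dsubmx z)) <= B by rewrite leNgt hD.
have hin : dsubmx z \in finmap.enum_fset (fset_set S).
  by have := in_fset_set hfin (dsubmx z); rewrite (mem_set Sq).
exact: (le_bigmax_seq _ _ _ (fun q : 'cV[int]_n => mnorm n (zvec q : 'cV[R]_n)) hin).
Qed.

End LambdaA.

(** Continuity of [psi] is only needed for the existence of [r], which is
    assumed here. *)
Theorem theorem8p5 (R : realType) (m n : nat) (hm : (0 < m)%N) (hn : (0 < n)%N)
    (psi : R -> R)
    (psi_pos : forall x, 1 <= x -> 0 < psi x)
    (psi_noninc : forall x y, 1 <= x -> x <= y -> psi y <= psi x)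
    (psi_cont : {within [set x : R | 1 <= x], continuous (psi : R -> R)})
    (r : R -> R) (hr : is_Dmn m n psi r) :
  (forall g : 'M[R]_(m + n), `|\det g| = 1 ->
     (psi_n_approximable m n psi (lattice_of (m + n) g) <->
      forall T : R, exists t, T < t /\ 0 < t /\
        r t <= Delta (m + n) [set ft m n t *m v | v in lattice_of (m + n) g])) /\
  (forall A : 'M[R]_(m, n),
     (psi_approximable m n psi A <->
      forall T : R, exists t, T < t /\ 0 < t /\
        r t <= Delta (m + n) [set ft m n t *m v | v in Lambda_A m n A])).
Proof.
have approxP := psi_n_approximable_Delta_ge_often hm hn psi_pos psi_noninc hr.
split=> [g /unitmx_normdet1|A]; first exact: approxP.
rewrite psi_approximable_LambdaA; apply: approxP.
by apply: unitmx_normdet1; rewrite det_ublock !det1 mulr1 normr1.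
Qed.
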